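(* Let $F$ be a tree ensemble with input dimension $n$ and output dimension $1$, let $V_f$ be a set of variables referenced by $F$, let $\bar c=(c_1,\dots,c_n)\in\mathcal D^n$ and $d=f_{bin}(\bar c;F)$. Let $I\subseteq\{1,\dots,n\}$ be the set returned by the following procedure: set $S=\emptyset$ and $\hat x_i=\alpha(\{c_i\})$ for all $i$; for $i=1,\dots,n$ in order: set $\hat x_i=\top$; if $i\in V_f$, then if $\mathrm{Valid}(\hat x_1,\dots,\hat x_n)$ holds put $S:=S\cup\{i\}$, and otherwise reset $\hat x_i=\alpha(\{c_i\})$; finally return $I=V_f\setminus S$. Here $\mathrm{Valid}(\hat x_1,\dots,\hat x_n)$ holds iff $f_{bin}(\bar x;F)=d$ for every $\bar x\in\gamma(\hat x_1)\times\dots\times\gamma(\hat x_n)$. Then $E=\{(x_i,c_i):i\in I\}$ is a minimal explanation for the prediction $f_{bin}(\bar c;F)=d$: $E$ is valid, and no proper subset of $E$ is valid.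
   Context: $\mathcal{D}\subset\mathbb{R}$ is a fixed finite nonempty set. For nonempty $V\subseteq\mathcal D$, $\alpha(V)=[\min V,\max V]$, and $\gamma([l,u])=\{v\in\mathcal D:l\le v\le u\}$; $\top=\alpha(\mathcal D)$, so $\gamma(\top)=\mathcal D$ and $\gamma(\alpha(\{c\}))=\{c\}$. Decision tree $T=\{(X_1,y_1),\dots,(X_k,y_k)\}$: $X_1,\dots,X_k$ partition $\mathcal D^n$, $y_j\in\mathbb R$, $t(\bar x;T)=y_j$ iff $\bar x\in X_j$. Tree ensemble $F=(T_1,\dots,T_b)$: $f(\bar x;F)=\sum_i t(\bar x;T_i)$. Binary classifier: $f_{bin}(\bar x;F)=1$ if $1/(1+e^{-f(\bar x;F)})>0.5$, else $0$. Variables referenced: $V_f\subseteq\{1,\dots,n\}$ is such that, for every tree of $F$ and every leaf region $X_j$, membership $\bar x\in X_j$ does not depend on the coordinates $x_i$ with $i\notin V_f$ (i.e. $V_f$ contains the union of the coordinates tested by the decision rules of the trees). Valid explanation: $E\subseteq\{(x_1,c_1),\dots,(x_n,c_n)\}$ is valid for the prediction $f_{bin}(\bar c;F)=d$ iff every $\bar x\in\mathcal D^n$ with $x_i=c_i$ for all $(x_i,c_i)\in E$ satisfies $f_{bin}(\bar x;F)=d$. A valid explanation is minimal iff none of its proper subsets is valid. *)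

From mathcomp Require Import all_boot all_order all_algebra.
From mathcomp Require Import boolp reals sequences exp.
Set Implicit Arguments. Unset Strict Implicit. Unset Printing Implicit Defensive.
Import Order.TTheory GRing.Theory Num.Theory.
Local Open Scope ring_scope.

Section Defs.
Variables (R : realType) (n : nat).

(* The finite nonempty domain D is given as a (nonempty) sequence of reals. *)
Definition inDom (D : seq R) (x : 'I_n -> R) : Prop := forall i, x i \in D.

(* Interval abstract domain: an abstract value is a pair (l, u) = [l, u]. *)
Definition alpha (V : seq R) : R * R :=
  (foldr Num.min (head 0 V) V, foldr Num.max (head 0 V) V).
Definition gamma (D : seq R) (a : R * R) : pred R :=
  [pred v | (v \in D) && (a.1 <= v <= a.2)].
Definition top (D : seq R) : R * R := alpha D.

(* A decision tree: list of leaves (region X_j, value y_j). *)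
Definition leaf := ((('I_n -> R) -> bool) * R)%type.
Definition dtree := seq leaf.
Definition is_partition (D : seq R) (T : dtree) : Prop :=
  forall x, inDom D x -> count (fun l : leaf => l.1 x) T = 1%N.
Definition tval (T : dtree) (x : 'I_n -> R) : R :=
  head 0 [seq l.2 | l <- T & l.1 x].
Definition ensemble := seq dtree.
Definition fval (F : ensemble) (x : 'I_n -> R) : R := \sum_(T <- F) tval T x.
Definition fbin (F : ensemble) (x : 'I_n -> R) : nat :=
  if 1 / (1 + expR (- fval F x)) > 1 / 2 then 1%N else 0%N.

(* V_f: leaf membership (on D^n) does not depend on coordinates outside Vf *)
Definition referenced (D : seq R) (F : ensemble) (Vf : {set 'I_n}) : Prop :=
  forall T, T \in F -> forall l : leaf, l \in T ->
  forall x y, inDom D x -> inDom D y -> (forall i, i \in Vf -> x i = y i) ->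
  l.1 x = l.1 y.

(* Explanations E = {(x_i,c_i) : i in E} are represented by their index sets. *)
Definition valid_expl (D : seq R) (F : ensemble) (c : 'I_n -> R) (d : nat)
    (E : {set 'I_n}) : Prop :=
  forall x, inDom D x -> (forall i, i \in E -> x i = c i) -> fbin F x = d.
Definition minimal_expl (D : seq R) (F : ensemble) (c : 'I_n -> R) (d : nat)
    (E : {set 'I_n}) : Prop :=
  valid_expl D F c d E /\ (forall E' : {set 'I_n}, E' \proper E -> ~ valid_expl D F c d E').

Definition ValidAbs (D : seq R) (F : ensemble) (d : nat)
    (xh : 'I_n -> R * R) : Prop :=
  forall x : 'I_n -> R, (forall i, x i \in gamma D (xh i)) -> fbin F x = d.

Definition step (D : seq R) (F : ensemble) (d : nat) (Vf : {set 'I_n})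
    (c : 'I_n -> R) (st : {set 'I_n} * ('I_n -> R * R)) (i : 'I_n)
    : {set 'I_n} * ('I_n -> R * R) :=
  let xh' := fun j => if j == i then top D else st.2 j in
  if i \in Vf then
    (if `[< ValidAbs D F d xh' >] then (i |: st.1, xh')
     else (st.1, fun j => if j == i then alpha [:: c i] else st.2 j))
  else (st.1, xh').

Definition procedure (D : seq R) (F : ensemble) (Vf : {set 'I_n})
    (c : 'I_n -> R) : {set 'I_n} :=
  let d := fbin F c in
  let S := (foldl (step D F d Vf c) (set0, fun i => alpha [:: c i])
                  (enum 'I_n)).1 in
  Vf :\: S.

End Defs.

From Pilot Require Import Defs.
From mathcomp Require Import all_boot all_order all_algebra.
From mathcomp Require Import boolp reals sequences exp.
Set Implicit Arguments. Unset Strict Implicit. Unset Printing Implicit Defensive.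
Import Order.TTheory GRing.Theory Num.Theory.
Local Open Scope ring_scope.

(* The proof is a loop invariant for the fold over the indices 1..n.  After
   processing a prefix P of the indices with current state (S, xh):
   - S contains only processed referenced indices,
   - xh i is top for processed indices that are unreferenced or freed (in S),
     and the singleton interval alpha {c_i} otherwise,
   - Valid(xh) holds, and
   - every processed referenced index that was kept (not in S) has a
     counterexample: a point of D^n agreeing with c on Vf \ S except at i,
     whose prediction differs from d.
   Validity of the abstract box is preserved when an unreferenced coordinate is
   freed because fbin only depends on the referenced coordinates.  At the end,
   the third clause gives validity of E = Vf \ S, and the fourth clause refutes
   every proper subset of E (since S only grows, the witnesses stay valid). *)

Section Intervals.
Variable R : realType.

Lemma foldr_min_le (a : R) (s : seq R) v : v \in s -> foldr Num.min a s <= v.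
Proof.
elim: s => //= y s IH; rewrite in_cons => /orP [/eqP ->|/IH H].
  by rewrite ge_min lexx.
by rewrite ge_min H orbT.
Qed.

Lemma foldr_max_ge (a : R) (s : seq R) v : v \in s -> v <= foldr Num.max a s.
Proof.
elim: s => //= y s IH; rewrite in_cons => /orP [/eqP ->|/IH H].
  by rewrite le_max lexx.
by rewrite le_max H orbT.
Qed.

Lemma gamma_top (D : seq R) v : (v \in gamma D (top D)) = (v \in D).
Proof.
rewrite /gamma /top /alpha inE /=.
by case vD: (v \in D) => //=; rewrite foldr_min_le // foldr_max_ge.
Qed.

Lemma gamma_alpha1 (D : seq R) a v :
  (v \in gamma D (alpha [:: a])) = (v \in D) && (v == a).
Proof.
rewrite /gamma /alpha inE /= minxx maxxx; case: (v \in D) => //=.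
by rewrite eq_le andbC.
Qed.

Lemma gamma_dom (D : seq R) a v : v \in gamma D a -> v \in D.
Proof. by rewrite inE => /andP []. Qed.

End Intervals.

Section Procedure.
Variables (R : realType) (n : nat) (D : seq R) (F : ensemble R n).
Variables (Vf : {set 'I_n}) (c : 'I_n -> R).
Hypothesis Vf_referenced : referenced D F Vf.
Hypothesis c_dom : inDom D c.

Lemma fbin_referenced x y : inDom D x -> inDom D y ->
  (forall i, i \in Vf -> x i = y i) -> fbin F x = fbin F y.
Proof.
move=> xD yD xy; rewrite /fbin /fval (@eq_big_seq _ _ _ _ F
  (fun T => Defs.tval T x) (fun T => Defs.tval T y)) // => T TF.
rewrite /Defs.tval (@eq_in_filter _ (fun l : leaf R n => l.1 x) (fun l => l.1 y)) //.
by move=> l lT; apply: (Vf_referenced TF lT).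
Qed.

Definition abs_state (P : seq 'I_n) (S : {set 'I_n}) (j : 'I_n) : R * R :=
  if (j \in P) && ((j \notin Vf) || (j \in S)) then top D else alpha [:: c j].

(* Index i cannot be freed on top of S: some point fixing c on (Vf \ S) - {i}
   changes the prediction. *)
Definition counterexample (S : {set 'I_n}) (i : 'I_n) : Prop :=
  exists2 x : 'I_n -> R, inDom D x &
    (forall j, j \in Vf :\: S -> j != i -> x j = c j) /\ fbin F x != fbin F c.

Definition Inv (P : seq 'I_n) (st : {set 'I_n} * ('I_n -> R * R)) : Prop :=
  [/\ (forall j, j \in st.1 -> (j \in Vf) && (j \in P)),
      st.2 =1 abs_state P st.1,
      ValidAbs D F (fbin F c) st.2 &
      (forall i, i \in P -> i \in Vf -> i \notin st.1 -> counterexample st.1 i)].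

Lemma Inv_init : Inv [::] (set0, fun i => alpha [:: c i]).
Proof.
split => //= [j|x xc]; first by rewrite in_set0.
suff -> : x = c by [].
by apply: funext => j; move: (xc j); rewrite gamma_alpha1 => /andP [_ /eqP].
Qed.

Lemma counterexample_grow (S S' : {set 'I_n}) i :
  S \subset S' -> counterexample S i -> counterexample S' i.
Proof.
move=> SS' [x xD [xc xd]]; exists x => //; split => // j.
rewrite !in_setD => /andP [jS' jV]; apply: xc; rewrite in_setD jV andbT.
by apply: contra jS' => /(subsetP SS').
Qed.

Section Step.
Variables (P : seq 'I_n) (S : {set 'I_n}) (xh : 'I_n -> R * R) (i : 'I_n).
Hypothesis i_fresh : i \notin P.
Hypothesis inv : Inv P (S, xh).

Let xh_top := fun j => if j == i then top D else xh j.

Lemma fresh_not_freed : i \notin S.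
Proof. by case: inv => /= HS _ _ _; apply/negP => /HS /andP [_]; apply/negP. Qed.

Lemma fresh_singleton : xh i = alpha [:: c i].
Proof. by case: inv => /= _ Hx _ _; rewrite Hx /abs_state (negbTE i_fresh). Qed.

Lemma step_unreferenced : i \notin Vf -> Inv (rcons P i) (S, xh_top).
Proof.
case: inv => /= HS Hx Hv Hc iV; split => /=.
- by move=> j /HS /andP [-> jP]; rewrite mem_rcons in_cons jP orbT.
- move=> j; rewrite /xh_top /abs_state mem_rcons in_cons.
  by case: eqP => [->|_] /=; rewrite ?iV // -/(abs_state P S j) Hx.
- move=> x xg; pose y j := if j == i then c i else x j.
  have xD : inDom D x by move=> j; apply: gamma_dom (xg j).
  have yD : inDom D y by move=> j; rewrite /y; case: eqP.
  rewrite (@fbin_referenced x y) //; last first.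
    by move=> j jV; rewrite /y; case: eqP => // ji; rewrite -ji jV in iV.
  apply: Hv => j; rewrite /y; case: eqP => [->|/eqP ji].
    by rewrite fresh_singleton gamma_alpha1 eqxx c_dom.
  by move: (xg j); rewrite /xh_top (negbTE ji).
- move=> k; rewrite mem_rcons in_cons => /orP [/eqP ->|kP]; first by rewrite (negbTE iV).
  exact: Hc.
Qed.

Lemma step_accept : i \in Vf -> ValidAbs D F (fbin F c) xh_top ->
  Inv (rcons P i) (i |: S, xh_top).
Proof.
case: inv => /= HS Hx _ Hc iV Hv; split => //=.
- move=> j; rewrite in_setU1 mem_rcons in_cons => /orP [/eqP ->|/HS /andP [-> ->]];
    by rewrite ?iV ?orbT ?eqxx.
- move=> j; rewrite /xh_top /abs_state mem_rcons in_cons in_setU1.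
  by case: eqP => [->|_] /=; rewrite ?orbT // -/(abs_state P S j) Hx.
- move=> k; rewrite mem_rcons in_cons in_setU1 => /orP [/eqP ->|kP] kV;
    first by rewrite eqxx.
  rewrite negb_or => /andP [_ kS]; apply: counterexample_grow (Hc k kP kV kS).
  exact: subsetUr.
Qed.

(* Keeping a referenced coordinate fixed: the failed validity check yields a
   point of the freed box that changes the prediction. *)
Lemma step_reject : i \in Vf -> ~ ValidAbs D F (fbin F c) xh_top ->
  Inv (rcons P i) (S, fun j => if j == i then alpha [:: c i] else xh j).
Proof.
case: inv => /= HS Hx Hv Hc iV Hnv.
have [x xg xd] : exists2 x, (forall j, x j \in gamma D (xh_top j)) &
    fbin F x != fbin F c.
  apply: contrapT => Hn; apply: Hnv => x xg; apply/eqP/negPn/negP => xd.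
  by apply: Hn; exists x.
split => /=.
- by move=> j /HS /andP [-> jP]; rewrite mem_rcons in_cons jP orbT.
- move=> j; rewrite /abs_state mem_rcons in_cons.
  case: eqP => [->|_] /=; last by rewrite -/(abs_state P S j) Hx.
  by rewrite iV (negbTE fresh_not_freed).
- by move=> y yg; apply: Hv => j; move: (yg j); case: eqP => // ->; rewrite fresh_singleton.
- move=> k; rewrite mem_rcons in_cons => /orP [/eqP ->|kP] kV kS; last exact: Hc.
  exists x; first by move=> j; apply: gamma_dom (xg j).
  split => // j; rewrite in_setD => /andP [jS jV] /negbTE ji.
  move: (xg j); rewrite /xh_top ji Hx /abs_state jV (negbTE jS) andbF gamma_alpha1.
  by case/andP => _ /eqP.
Qed.

End Step.

Lemma step_Inv P st i : i \notin P -> Inv P st ->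
  Inv (rcons P i) (step D F (fbin F c) Vf c st i).
Proof.
case: st => S xh iP inv; rewrite /step /=.
case iV: (i \in Vf); last by apply: step_unreferenced => //; rewrite iV.
case: asboolP => Hv; first exact: step_accept.
exact: step_reject.
Qed.

Lemma foldl_Inv s P st : uniq (P ++ s) -> Inv P st ->
  Inv (P ++ s) (foldl (step D F (fbin F c) Vf c) st s).
Proof.
elim: s P st => [|i s IH] P st U inv /=; first by rewrite cats0.
rewrite -cat_rcons; apply: IH; first by rewrite cat_rcons.
apply: step_Inv => //.
by move: U; rewrite cat_uniq /= => /and3P [_ /norP []].
Qed.

Lemma procedure_Inv : Inv (enum 'I_n)
  (foldl (step D F (fbin F c) Vf c) (set0, fun i => alpha [:: c i]) (enum 'I_n)).
Proof. exact: (@foldl_Inv (enum 'I_n) [::] (set0, fun i => alpha [:: c i]) (enum_uniq 'I_n) Inv_init). Qed.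

End Procedure.

Theorem mainTheorem8 (R : realType) (n : nat) (D : seq R) (F : ensemble R n)
  (Vf : {set 'I_n}) (c : 'I_n -> R) :
  D != [::] ->
  (forall T, T \in F -> is_partition D T) ->
  referenced D F Vf ->
  inDom D c ->
  minimal_expl D F c (fbin F c) (procedure D F Vf c).
Proof.
move=> _ _ Href cD.
have := procedure_Inv Href cD.
rewrite /procedure /=; set st := foldl _ _ _ => -[_ Hx Hv Hc].
split.
- (* the final box contains every completion of c on Vf \ S *)
  move=> x xD xc; apply: Hv => j; rewrite Hx /abs_state mem_enum /=.
  case: ifP => freed; first by rewrite gamma_top.
  rewrite gamma_alpha1 xD /= xc // in_setD.
  by move: freed; case: (j \in Vf); case: (j \in st.1).
- (* dropping any index i of Vf \ S is refuted by its counterexample *)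
  move=> E' /properP [sub [i iI iE]] HE.
  move: (iI); rewrite in_setD => /andP [iS iV].
  have [x xD [xc xd]] := Hc i (mem_enum _ _) iV iS.
  move/negP: xd; apply; apply/eqP; apply: HE => // j jE.
  apply: xc; first exact: (subsetP sub).
  by apply/eqP => ji; rewrite -ji jE in iE.
Qed.
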